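(* Consider attribution mechanisms $M$ that map every finite reported cooperative game $([m],v)$ (with $v(\emptyset)=0$) to a payment vector $M(v)=(p_1,\ldots,p_m)\in\mathbb{R}^m$. Within the class of all finite monotone data-value games, no attribution mechanism can satisfy both of the following properties: (1) Exact reported-game Shapley fairness: for every submitted game $([m],v)$ and every submitted identity $j\in[m]$, $p_j=\mathrm{Sh}_j(v)$, the Shapley value of $j$ in $v$. (2) Unrestricted false-name-proofness: no latent provider can increase its total payment (the sum of payments to all identities it controls) by replacing one honest identity with finitely many submitted identities. Moreover, the conflict holds even when all value functions in question are monotone and take values in $\{0,1\}$.
   Context: Setting: latent data providers submit datasets under identities; the reported game on the set of submitted identities $[m]$ is $v(T)=U(A(\biguplus_{j\in T}S_j))-U(A(\emptyset))$ for a learner $A$ and utility $U$, so $v(\emptyset)=0$. A game is monotone if $T\subseteq T'$ implies $v(T)\le v(T')$. A false-name split by a latent provider $i$ replaces the single identity $i$ by $k\ge 2$ submitted identities $i^1,\dots,i^k$ whose datasets jointly make up $i$'s data; the reported game is then a game on the new identity set, which in the class considered may be any finite monotone game (e.g., a split of player $A$ of the two-player unanimity game $v(\{A,B\})=1$, $v=0$ otherwise, may yield the three-player unanimity game $v'(T)=\mathbf{1}\{\{A_1,A_2,B\}\subseteq T\}$). The latent provider's payment after the split is the sum of the payments to its pseudonyms. The Shapley value is $\mathrm{Sh}_j(v)=\sum_{T\subseteq[m]\setminus\{j\}}\frac{|T|!(m-|T|-1)!}{m!}\,(v(T\cup\{j\})-v(T))$. *)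

From mathcomp Require Import all_boot all_order all_algebra.
Set Implicit Arguments. Unset Strict Implicit. Unset Printing Implicit Defensive.
Import Order.TTheory GRing.Theory Num.Theory.
Local Open Scope ring_scope.

Definition game (R : realFieldType) (m : nat) := {set 'I_m} -> R.

Definition mechanism (R : realFieldType) := forall m : nat, game R m -> 'I_m -> R.

Definition zero_normalized (R : realFieldType) m (v : game R m) : Prop :=
  v set0 = 0.

Definition monotone_game (R : realFieldType) m (v : game R m) : Prop :=
  forall S T : {set 'I_m}, S \subset T -> v S <= v T.

Definition binary_game (R : realFieldType) m (v : game R m) : Prop :=
  forall S : {set 'I_m}, v S = 0 \/ v S = 1.

Definition mono01_game (R : realFieldType) m (v : game R m) : Prop :=
  [/\ zero_normalized v, monotone_game v & binary_game v].

Definition shapley (R : realFieldType) m (v : game R m) (j : 'I_m) : R :=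
  \sum_(T : {set 'I_m} | j \notin T)
     ((#|T|`! * (m - #|T| - 1)`!)%:R / (m`!)%:R) * (v (j |: T) - v T).

Definition shapley_fair (R : realFieldType) (M : mechanism R) : Prop :=
  forall m (v : game R m), mono01_game v ->
    forall j : 'I_m, M m v j = shapley v j.

(* A false-name split of latent identity i of the game v on [m] into the game
   v' on [m']: phi sends every submitted identity of [m'] to the latent
   identity controlling it; every j <> i keeps exactly one identity, i gets
   k >= 2 pseudonyms, and coalitions made of whole providers have the same
   value as before (the pseudonyms' datasets jointly make up i's data). *)
Definition false_name_split (R : realFieldType) m (v : game R m) (i : 'I_m)
    m' (phi : 'I_m' -> 'I_m) (v' : game R m') : Prop :=
  [/\ forall j : 'I_m, j != i -> #|[set j' | phi j' == j]| = 1,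
      (2 <= #|[set j' | phi j' == i]|)%N
    & forall T : {set 'I_m}, v' (phi @^-1: T) = v T].

Definition false_name_proof (R : realFieldType) (M : mechanism R) : Prop :=
  forall m (v : game R m) (i : 'I_m) m' (phi : 'I_m' -> 'I_m) (v' : game R m'),
    mono01_game v -> mono01_game v' -> false_name_split v i phi v' ->
    \sum_(j' : 'I_m' | phi j' == i) M m' v' j' <= M m v i.

From mathcomp Require Import all_boot all_order all_algebra.
From mathcomp Require Import lra.
Set Implicit Arguments. Unset Strict Implicit. Unset Printing Implicit Defensive.
Import Order.TTheory GRing.Theory Num.Theory.
Local Open Scope ring_scope.

(* In the unanimity game of the grand coalition every one of the m identities
   has Shapley value 1/m.  Splitting one provider of the two-player game into
   two pseudonyms yields the three-player unanimity game, where the pseudonyms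
   jointly collect 2/3 > 1/2: Shapley fairness forces a profitable split. *)

Definition unanimity_game (R : realFieldType) m : game R m :=
  fun S => (S == [set: 'I_m])%:R.
Arguments unanimity_game : clear implicits.

Lemma unanimity_game_mono01 (R : realFieldType) m :
  (0 < m)%N -> mono01_game (unanimity_game R m).
Proof.
move=> m_gt0; split.
- rewrite /zero_normalized /unanimity_game; case: m m_gt0 => // m _.
  by case: eqP => // /setP /(_ ord0); rewrite !inE.
- move=> S T sST; rewrite /unanimity_game -!subTset ler_nat.
  by case: (boolP (setT \subset S)) => // /subset_trans /(_ sST) ->.
- by move=> S; rewrite /unanimity_game; case: eqP; [right | left].
Qed.

Lemma setU1_eq_setT (T : finType) (a : T) (A : {set T}) :
  a \notin A -> (a |: A == setT) = (A == [set~ a]).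
Proof.
move=> aNA; apply/eqP/eqP => [aAT | ->]; last exact: setUCr.
by rewrite -(setU1K aNA) aAT setTD.
Qed.

Lemma shapley_unanimity (R : realFieldType) m (j : 'I_m) :
  shapley (unanimity_game R m) j = m%:R^-1.
Proof.
(* j is pivotal only for the coalition [set~ j]. *)
rewrite /shapley (bigD1 [set~ j]) ?inE ?eqxx //= big1 ?addr0; last first.
  move=> T /andP[jNT TnCj]; rewrite /unanimity_game setU1_eq_setT // (negbTE TnCj).
  by case: eqP => [/setP /(_ j) | _]; rewrite ?inE ?(negbTE jNT) ?subrr ?mulr0.
have CjNT : [set~ j] == setT = false.
  by apply/negbTE/eqP => /setP /(_ j); rewrite !inE eqxx.
rewrite /unanimity_game setU1_eq_setT ?inE ?eqxx // {}CjNT subr0 mulr1.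
rewrite cardsC1 card_ord; case: m j => [[] //| n _] /=.
rewrite subSnn subnn fact0 muln1 factS natrM invfM mulrCA mulfV ?mulr1 //.
by rewrite pnatr_eq0 -lt0n fact_gt0.
Qed.

Lemma unanimity_game_preimset (R : realFieldType) m m' (phi : 'I_m' -> 'I_m) :
  (forall x, exists y, phi y = x) ->
  forall T : {set 'I_m}, unanimity_game R m' (phi @^-1: T) = unanimity_game R m T.
Proof.
move=> phi_surj T; rewrite /unanimity_game; congr (nat_of_bool _)%:R.
apply/eqP/eqP => [/setP phiT | ->]; last exact: preimsetT.
apply/setP => x; have [y <-] := phi_surj x.
by have := phiT y; rewrite !inE.
Qed.

Definition merge01 (x : 'I_3) : 'I_2 := if (x < 2)%N then ord0 else ord_max.

Lemma card_merge01_fiber0 : #|[set x | merge01 x == ord0]| = 2.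
Proof.
have -> : [set x | merge01 x == ord0] = [set ord0; inord 1].
  apply/setP => x; rewrite !inE /merge01 -!val_eqE /= inordK //.
  by case: x => [[|[|[|]]]].
by rewrite cards2 -val_eqE /= inordK.
Qed.

Lemma card_merge01_fiber_max : #|[set x | merge01 x == ord_max]| = 1.
Proof.
have -> : [set x | merge01 x == ord_max] = [set ord_max].
  apply/setP => x; rewrite !inE /merge01 -!val_eqE /=.
  by case: x => [[|[|[|]]]].
exact: cards1.
Qed.

Lemma merge01_surj (y : 'I_2) : exists x, merge01 x = y.
Proof. by case: y => [[|[|]]] // y_lt2; [exists ord0 | exists ord_max]; apply/val_inj. Qed.

Lemma merge01_false_name_split (R : realFieldType) :
  false_name_split (unanimity_game R 2) ord0 merge01 (unanimity_game R 3).
Proof.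
split.
- move=> j jN0; have -> : j = ord_max by apply/val_inj; case: j jN0 => [[|[|]]].
  exact: card_merge01_fiber_max.
- by rewrite card_merge01_fiber0.
- exact: unanimity_game_preimset merge01_surj.
Qed.

Lemma shapley_fair_unanimity (R : realFieldType) (M : mechanism R) m (j : 'I_m) :
  shapley_fair M -> M m (unanimity_game R m) j = m%:R^-1.
Proof.
move=> fair; rewrite fair ?shapley_unanimity //.
by apply: unanimity_game_mono01; case: m j => [[]|].
Qed.

Theorem theorem1 (R : realFieldType) (M : mechanism R) :
  ~ (shapley_fair M /\ false_name_proof M).
Proof.
case=> fair fnp.
have := fnp _ _ _ _ _ _ (@unanimity_game_mono01 R 2 isT)
  (@unanimity_game_mono01 R 3 isT) (merge01_false_name_split R).
rewrite shapley_fair_unanimity // (eq_bigr _ (fun j _ => shapley_fair_unanimity j fair)).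
rewrite -big_set /= sumr_const card_merge01_fiber0 mulr2n; lra.
Qed.
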